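(* Let $D$ be a link diagram on $S$ admitting a source-sink structure, and let $p$ be a point on an edge of $D$. Let $D\sqcup\bigcirc$ be the diagram obtained by adding a small contractible crossingless circle $O$ inside a small disk near $p$, disjoint from $D$. Identify $[[D\sqcup\bigcirc]]$ with $[[D]]\otimes V$, where the last factor corresponds to $O$; under this identification the differential $d_h$ of $D\sqcup\bigcirc$ is $d_h\otimes\mathrm{id}$. Then $[[D]]\otimes v_+$ is a subcomplex; denote the quotient complex by $[[D\sqcup\bigcirc]]_{v_+=0}$. Define two maps state by state. For a state $s$ of $D$, let $C_s$ be the circle of $D_s$ through $p$. - $\Phi\colon[[D]]\otimes V\to[[D]]$ merges $O$ into $C_s$: it applies $m_h$ to the factors of $C_s$ (first) and $O$ (second), and the identity on the other factors. - $\Psi\colon[[D]]\to[[D]]\otimes V$ splits $O$ off $C_s$: it applies $\Delta_h$ to the factor of $C_s$, producing factors for $C_s$ (first) and $O$ (second), and the identity on the other factors. Then the restriction $\Phi\colon[[D]]\otimes v_+\to[[D]]$ and the composition of $\Psi$ with the quotient map, $[[D]]\to[[D\sqcup\bigcirc]]_{v_+=0}$, are both isomorphisms of chain complexes with respect to $d_h$.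
   Context: Throughout, $S$ is a connected closed oriented surface and all vector spaces are over $\mathbb Z_2$. Links in $S\times[0,1]$ are represented by diagrams on $S$: 4-valent graphs embedded in $S$, possibly together with closed components that have no vertices, with over/under-crossing information at each crossing. A source-sink structure on a diagram $D$ is an orientation of the edges of $D$, viewed as a 4-valent graph, such that at each crossing the two incoming edges are opposite to each other and the two outgoing edges are opposite to each other. Let $\mathfrak L$ be the set of free homotopy classes of oriented loops in $S$, and let $\bigcirc$ be the class of contractible loops. Let $\mathfrak H$ be the quotient of the free abelian group on $\mathfrak L$ by $\bigcirc=0$ and $[\gamma]=[-\gamma]$, where $-\gamma$ is $\gamma$ with reversed orientation. A closed curve is trivial if it is contractible, and nontrivial otherwise. A state of $D$ is a map $s$ from the set of crossings to $\{0,1\}$. It determines the resolution $D_s$, a set of disjoint circles in $S$, by taking the $0$- or $1$-smoothing (Kauffman's $A$/$B$-smoothing) at each crossing. An edge $s\to s'$ of the state cube changes one crossing from $0$ to $1$. Its effect on circles is a merge of two circles into one, a split of one circle into two, or a one-circle-to-one-circle change. $V$ has basis $v_+,v_-$. $V(s)=\bigotimes_{C\in D_s}V$ and $[[D]]=\bigoplus_sV(s)$. Define linear maps on $V\otimes V\to V$: - $m(v_+\otimes v_+)=v_+$, $m(v_\pm\otimes v_\mp)=v_-$, $m(v_-\otimes v_-)=0$; - $m^0_h(v_\pm\otimes v_\mp)=v_-$, $m^0_h(v_+\otimes v_+)=m^0_h(v_-\otimes v_-)=0$; - $m^1_h(v_+\otimes v_+)=v_+$, $m^1_h(v_-\otimes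 v_+)=v_-$, and $m^1_h$ is $0$ on the other two basis vectors; - $m^2_h(v_+\otimes v_+)=v_+$, $m^2_h(v_+\otimes v_-)=v_-$, and $m^2_h$ is $0$ on the other two basis vectors. Define linear maps on $V\to V\otimes V$: - $\Delta(v_+)=v_+\otimes v_-+v_-\otimes v_+$, $\Delta(v_-)=v_-\otimes v_-$; - $\Delta^0_h(v_+)=v_+\otimes v_-+v_-\otimes v_+$, $\Delta^0_h(v_-)=0$; - $\Delta^1_h(v_+)=v_+\otimes v_-$, $\Delta^1_h(v_-)=v_-\otimes v_-$; - $\Delta^2_h(v_+)=v_-\otimes v_+$, $\Delta^2_h(v_-)=v_-\otimes v_-$. For a merge of $\gamma_1,\gamma_2$ (first and second factor) into $\gamma$, $m_h$ is: - $m$ if all three circles are trivial; - $m^1_h$ if only $\gamma_2$ is trivial; - $m^2_h$ if only $\gamma_1$ is trivial; - $m^0_h$ if only $\gamma$ is trivial; - $0$ if all three are nontrivial. For a split of $\gamma$ into $\gamma_1,\gamma_2$, $\Delta_h$ is $\Delta,\Delta^1_h,\Delta^2_h,\Delta^0_h,0$ in the same respective cases. The differential $d_h$ on $[[D]]$ is the sum over cube edges of: $m_h$ on the merging factors tensored with the identity, or $\Delta_h$ on the splitting factor tensored with the identity, or $0$ for a one-to-one change. *)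

From HB Require Import structures.
From mathcomp Require Import all_boot all_order all_algebra.
Set Implicit Arguments. Unset Strict Implicit. Unset Printing Implicit Defensive.
Import GRing.Theory.
Local Open Scope ring_scope.

(* The four half-edges at a crossing, in counterclockwise cyclic order
   (orientation of S).  Half-edges q0,q2 form the over-strand, q1,q3 the
   under-strand. *)
Definition q0 : 'I_4 := @Ordinal 4 0 isT.
Definition q1 : 'I_4 := @Ordinal 4 1 isT.
Definition q2 : 'I_4 := @Ordinal 4 2 isT.
Definition q3 : 'I_4 := @Ordinal 4 3 isT.

(* A diagram: [ncross] crossings, each with 4 half-edges; [edge] pairs
   half-edges into the edges of the 4-valent graph (fixed-point-free
   involution); plus [nfree] closed components without crossings. *)
Record diagram := Diagram {
  ncross : nat;
  nfree : nat;
  edge : 'I_ncross * 'I_4 -> 'I_ncross * 'I_4;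
  edge_inv : forall h, edge (edge h) = h;
  edge_nofix : forall h, edge h != h
}.

Definition hedge (D : diagram) := ('I_(ncross D) * 'I_4)%type.
Definition spot (D : diagram) := (hedge D + 'I_(nfree D))%type.

(* Source-sink structure: out h = true iff the edge containing the
   half-edge h is oriented away from the crossing of h. *)
Definition source_sink (D : diagram) : Prop :=
  exists out : hedge D -> bool,
    (forall h, out (edge h) = ~~ out h) /\
    (forall c : 'I_(ncross D),
        out (c, q0) = out (c, q2) /\ out (c, q1) = out (c, q3) /\
        out (c, q0) != out (c, q1)).

Definition state (D : diagram) := {ffun 'I_(ncross D) -> bool}.

(* Smoothing partner of a half-edge at a crossing.  0-smoothing
   (Kauffman A-smoothing, joining the A-regions, which lie between q0,q1 and
   between q2,q3): arcs q1-q2 and q3-q0.  1-smoothing (B): arcs q0-q1, q2-q3. *)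
Definition spart (b : bool) (i : 'I_4) : 'I_4 :=
  if b then match val i with 0 => q1 | 1 => q0 | 2 => q3 | _ => q2 end
  else match val i with 0 => q3 | 1 => q2 | 2 => q1 | _ => q0 end.

Definition adj (D : diagram) (s : state D) : rel (spot D) :=
  fun a b => match a, b with
  | inl h, inl h' => (h' == edge h) || (h' == (h.1, spart (s h.1) h.2))
  | inr j, inr j' => j == j'
  | _, _ => false
  end.

Definition same_circle (D : diagram) (s : state D) (a b : spot D) : bool :=
  connect (adj s) a b.

Definition lab (D : diagram) := {ffun spot D -> bool}.

(* basis of [[D]]: a state s with a labelling (true = v_+, false = v_-) of
   the circles of D_s, i.e. a labelling of spots constant on circles *)
Definition good (D : diagram) (x : state D * lab D) : bool :=
  [forall a, forall b, same_circle x.1 a b ==> (x.2 a == x.2 b)].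

Definition basis (D : diagram) := {x : state D * lab D | good x}.

Definition bst (D : diagram) (b : basis D) : state D := (val b).1.
Definition blab (D : diagram) (b : basis D) : lab D := (val b).2.

(* [[D]] and [[D]] (x) V *)
Definition cx (D : diagram) := {ffun basis D -> 'F_2}.
Definition cxV (D : diagram) := {ffun (basis D * bool) -> 'F_2}.

(* Coefficient forms: m x y z = coefficient of v_z in m(v_x (x) v_y);
   Dl x a b = coefficient of v_a (x) v_b in Delta(v_x). *)
Definition mm (x y z : bool) : 'F_2 := ((x && y && z) || ((x != y) && ~~ z))%:R.
Definition mh0 (x y z : bool) : 'F_2 := ((x != y) && ~~ z)%:R.
Definition mh1 (x y z : bool) : 'F_2 := (y && (z == x))%:R.
Definition mh2 (x y z : bool) : 'F_2 := (x && (z == y))%:R.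
Definition Dl (x a b : bool) : 'F_2 := ((x && (a != b)) || (~~ x && ~~ a && ~~ b))%:R.
Definition Dh0 (x a b : bool) : 'F_2 := (x && (a != b))%:R.
Definition Dh1 (x a b : bool) : 'F_2 := (~~ b && (a == x))%:R.
Definition Dh2 (x a b : bool) : 'F_2 := (~~ a && (b == x))%:R.

(* m_h for a merge of gamma1 (triviality t1), gamma2 (t2) into gamma (t) *)
Definition m_h (t1 t2 t : bool) : bool -> bool -> bool -> 'F_2 :=
  match t1, t2, t with
  | true, true, true => mm
  | false, true, false => mh1
  | true, false, false => mh2
  | false, false, true => mh0
  | _, _, _ => fun _ _ _ => 0
  end.

(* Delta_h for a split of gamma (t) into gamma1 (t1), gamma2 (t2) *)
Definition Delta_h (t t1 t2 : bool) : bool -> bool -> bool -> 'F_2 :=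
  match t, t1, t2 with
  | true, true, true => Dl
  | false, false, true => Dh1
  | false, true, false => Dh2
  | true, false, false => Dh0
  | _, _, _ => fun _ _ _ => 0
  end.

Definition flip (D : diagram) (s : state D) (c : 'I_(ncross D)) : state D :=
  [ffun x => if x == c then ~~ s x else s x].

Definition sp (D : diagram) (c : 'I_(ncross D)) (i : 'I_4) : spot D := inl (c, i).

(* Coefficient of the cube edge s -> s' = flip s c (s c = 0), from the
   labelling f of D_s to the labelling f' of D_s'.  [triv s a] is the
   triviality (contractibility) of the circle of D_s through the spot a. *)
Definition edge_coef (D : diagram) (triv : state D -> spot D -> bool)
    (s : state D) (c : 'I_(ncross D)) (f f' : lab D) : 'F_2 :=
  let s' := flip s c in
  let a0 := @sp D c q0 in let a1 := @sp D c q1 in let a2 := @sp D c q2 in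
  if ~~ same_circle s a0 a1 then
    (* merge of gamma1 = circle(a0), gamma2 = circle(a1) into circle'(a0) *)
    if [forall a, (~~ same_circle s a0 a && ~~ same_circle s a1 a) ==> (f' a == f a)]
    then m_h (triv s a0) (triv s a1) (triv s' a0) (f a0) (f a1) (f' a0)
    else 0
  else if ~~ same_circle s' a0 a2 then
    (* split of circle(a0) into gamma1 = circle'(a0), gamma2 = circle'(a2) *)
    if [forall a, (~~ same_circle s' a0 a && ~~ same_circle s' a2 a) ==> (f' a == f a)]
    then Delta_h (triv s a0) (triv s' a0) (triv s' a2) (f a0) (f' a0) (f' a2)
    else 0
  else 0 (* one circle to one circle *).

Definition dcoef (D : diagram) (triv : state D -> spot D -> bool)
    (b b' : basis D) : 'F_2 :=
  \sum_(c : 'I_(ncross D))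
     if ~~ bst b c && (bst b' == flip (bst b) c)
     then edge_coef triv (bst b) c (blab b) (blab b') else 0.

Definition dh (D : diagram) (triv : state D -> spot D -> bool) (v : cx D) : cx D :=
  [ffun b' => \sum_b v b * dcoef triv b b'].

Definition dhV (D : diagram) (triv : state D -> spot D -> bool) (w : cxV D) : cxV D :=
  [ffun x => \sum_b w (b, x.2) * dcoef triv b x.1].

(* Phi: merge O (second factor, trivial) into C_s = circle through p (first
   factor); the merged circle is isotopic to C_s, hence has its triviality. *)
Definition Phi (D : diagram) (triv : state D -> spot D -> bool) (p : spot D)
    (w : cxV D) : cx D :=
  [ffun b' => \sum_(x : basis D * bool)
     w x * (if (bst x.1 == bst b') &&
               [forall a, ~~ same_circle (bst b') p a ==> (blab b' a == blab x.1 a)]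
            then m_h (triv (bst b') p) true (triv (bst b') p)
                     (blab x.1 p) x.2 (blab b' p)
            else 0)].

Definition Psi (D : diagram) (triv : state D -> spot D -> bool) (p : spot D)
    (v : cx D) : cxV D :=
  [ffun y : basis D * bool => \sum_(b : basis D)
     v b * (if (bst b == bst y.1) &&
               [forall a, ~~ same_circle (bst b) p a ==> (blab y.1 a == blab b a)]
            then Delta_h (triv (bst b) p) (triv (bst b) p) true
                         (blab b p) (blab y.1 p) y.2
            else 0)].

Definition in_vplus (D : diagram) (w : cxV D) : Prop :=
  forall b : basis D, w (b, false) = 0.

(* With O trivial, both m_h(- (x) v_+) and the v_- component of Delta_h(-)
   are the identity of V, whatever the triviality of C_s: m(x (x) v_+) = x,
   m^1_h(x (x) v_+) = x, and the coefficient of (- (x) v_-) in Delta(x) or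
   Delta^1_h(x) is x.  Hence Phi restricted to [[D]] (x) v_+ and the v_- slice
   of Psi are both the identity of [[D]] once [[D]] (x) V is read as two copies
   of [[D]] (the v_+ and v_- slices), on each of which d_h (x) id acts as d_h. *)
From HB Require Import structures.
From mathcomp Require Import all_boot all_order all_algebra.
Set Implicit Arguments. Unset Strict Implicit. Unset Printing Implicit Defensive.
Import GRing.Theory.
Local Open Scope ring_scope.

Lemma m_h_unitr (t x z : bool) : m_h t true t x true z = (x == z)%:R.
Proof. by case: t; case: x; case: z. Qed.

Lemma Delta_h_counitr (t x a : bool) : Delta_h t t true x a false = (x == a)%:R.
Proof. by case: t; case: x; case: a. Qed.

Section SplitComplex.
Variables (D : diagram) (triv : state D -> spot D -> bool) (p : spot D).

Definition slice (w : cxV D) (o : bool) : cx D := [ffun b => w (b, o)].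

Lemma sliceB (w1 w2 : cxV D) o : slice (w1 - w2) o = slice w1 o - slice w2 o.
Proof. by apply/ffunP => b; rewrite !ffunE. Qed.

Lemma in_vplusE (w : cxV D) : in_vplus w <-> slice w false = 0.
Proof.
split=> [Hw | Hw b]; first by apply/ffunP => b; rewrite !ffunE Hw.
by have := congr1 (fun v : cx D => v b) Hw; rewrite !ffunE.
Qed.

Lemma slice_dhV (w : cxV D) o : slice (dhV triv w) o = dh triv (slice w o).
Proof. by apply/ffunP => b'; rewrite !ffunE; apply: eq_bigr => b _; rewrite ffunE. Qed.

Lemma dhV_vplus (w : cxV D) : in_vplus w -> in_vplus (dhV triv w).
Proof.
move/in_vplusE => Hw; apply/in_vplusE; rewrite slice_dhV Hw.
by apply/ffunP => b; rewrite !ffunE big1 // => b' _; rewrite ffunE mul0r.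
Qed.

Lemma eq_basis_off_circle (b b' : basis D) :
  bst b = bst b' ->
  (forall a, ~~ same_circle (bst b) p a -> blab b a = blab b' a) ->
  blab b p = blab b' p -> b = b'.
Proof.
case: b b' => [[s f] gb] [[s' f'] gb']; rewrite /bst /blab /= => eq_s Hoff Hp.
apply: val_inj; subst s'; congr pair; apply/ffunP => a.
have [on_p | /Hoff //] := boolP (same_circle s p a).
have /eqP <- := implyP (forallP (forallP gb p) a) on_p.
by have /eqP <- := implyP (forallP (forallP gb' p) a) on_p.
Qed.

Lemma agree_off_refl (b : basis D) :
  [forall a, ~~ same_circle (bst b) p a ==> (blab b a == blab b a)].
Proof. by apply/forallP => a; rewrite eqxx implybT. Qed.

Lemma Phi_coef_vplus (x b' : basis D) :
  (if (bst x == bst b') &&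
      [forall a, ~~ same_circle (bst b') p a ==> (blab b' a == blab x a)]
   then m_h (triv (bst b') p) true (triv (bst b') p) (blab x p) true (blab b' p)
   else 0) = (x == b')%:R.
Proof.
have [-> | ne] := eqVneq x b'; first by rewrite eqxx agree_off_refl m_h_unitr eqxx.
case: ifP => // /andP [/eqP Hs /forallP Hoff]; rewrite m_h_unitr.
case: eqP => // Hp; case/eqP: ne; apply: eq_basis_off_circle => // a.
by rewrite Hs => /(implyP (Hoff a)) /eqP.
Qed.

Lemma Psi_coef_vminus (b y : basis D) :
  (if (bst b == bst y) &&
      [forall a, ~~ same_circle (bst b) p a ==> (blab y a == blab b a)]
   then Delta_h (triv (bst b) p) (triv (bst b) p) true (blab b p) (blab y p) false
   else 0) = (b == y)%:R.
Proof.
have [-> | ne] := eqVneq b y; first by rewrite eqxx agree_off_refl Delta_h_counitr eqxx.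
case: ifP => // /andP [/eqP Hs /forallP Hoff]; rewrite Delta_h_counitr.
case: eqP => // Hp; case/eqP: ne; apply: eq_basis_off_circle => // a.
by move=> /(implyP (Hoff a)) /eqP.
Qed.

Lemma Phi_vplus (w : cxV D) : in_vplus w -> Phi triv p w = slice w true.
Proof.
move=> Hw; apply/ffunP => b'; rewrite !ffunE (bigD1 (b', true)) //=.
rewrite Phi_coef_vplus eqxx mulr1 big1 ?addr0 // => -[b []] /= ne; last first.
  by rewrite Hw mul0r.
rewrite Phi_coef_vplus; case: eqP => [eq_b | _]; last by rewrite mulr0.
by move: ne; rewrite eq_b eqxx.
Qed.

Lemma slice_Psi_vminus (v : cx D) : slice (Psi triv p v) false = v.
Proof.
apply/ffunP => y; rewrite !ffunE /= (bigD1 y) //= Psi_coef_vminus eqxx mulr1.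
by rewrite big1 ?addr0 // => b /negPf ne; rewrite Psi_coef_vminus ne mulr0.
Qed.

Lemma slice_vplus_inj (w1 w2 : cxV D) :
  in_vplus w1 -> in_vplus w2 -> slice w1 true = slice w2 true -> w1 = w2.
Proof.
move=> H1 H2 E; apply/ffunP => -[b []]; last by rewrite H1 H2.
by have := congr1 (fun v : cx D => v b) E; rewrite !ffunE.
Qed.

Definition vplus_embed (v : cx D) : cxV D := [ffun x => if x.2 then v x.1 else 0].

Lemma vplus_embed_vplus v : in_vplus (vplus_embed v).
Proof. by move=> b; rewrite ffunE. Qed.

Lemma slice_vplus_embed v : slice (vplus_embed v) true = v.
Proof. by apply/ffunP => b; rewrite !ffunE. Qed.

End SplitComplex.

Theorem lemma1 (D : diagram) (triv : state D -> spot D -> bool)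
  (Htriv : forall (s : state D) (a b : spot D),
      same_circle s a b -> triv s a = triv s b)
  (HSS : source_sink D) (p : spot D) :
  (* [[D]] (x) v_+ is a subcomplex *)
  (forall w : cxV D, in_vplus w -> in_vplus (dhV triv w)) /\
  (* Phi restricted to [[D]] (x) v_+ is a chain isomorphism onto [[D]] *)
  ((forall w : cxV D, in_vplus w -> Phi triv p (dhV triv w) = dh triv (Phi triv p w)) /\
   (forall w1 w2 : cxV D, in_vplus w1 -> in_vplus w2 ->
       Phi triv p w1 = Phi triv p w2 -> w1 = w2) /\
   (forall v : cx D, exists2 w : cxV D, in_vplus w & Phi triv p w = v)) /\
  (* Psi followed by the quotient map to [[D |_| O]]_{v_+=0} is a chain iso *)
  ((forall v : cx D, in_vplus (Psi triv p (dh triv v) - dhV triv (Psi triv p v))) /\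
   (forall v1 v2 : cx D, in_vplus (Psi triv p v1 - Psi triv p v2) -> v1 = v2) /\
   (forall y : cxV D, exists v : cx D, in_vplus (y - Psi triv p v))).
Proof.
split; first exact: dhV_vplus.
split; [split; [|split] | split; [|split]].
- move=> w Hw; rewrite (Phi_vplus _ _ (dhV_vplus triv Hw)) (Phi_vplus _ _ Hw).
  exact: slice_dhV.
- move=> w1 w2 H1 H2; rewrite (Phi_vplus _ _ H1) (Phi_vplus _ _ H2).
  exact: slice_vplus_inj.
- move=> v; exists (vplus_embed v); first exact: vplus_embed_vplus.
  by rewrite (Phi_vplus _ _ (vplus_embed_vplus v)) slice_vplus_embed.
- move=> v; apply/in_vplusE.
  by rewrite sliceB slice_dhV !slice_Psi_vminus subrr.
- move=> v1 v2 /in_vplusE; rewrite sliceB !slice_Psi_vminus.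
  by move/eqP; rewrite subr_eq0 => /eqP.
- move=> y; exists (slice y false); apply/in_vplusE.
  by rewrite sliceB slice_Psi_vminus subrr.
Qed.
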